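(* The size $\gamma$ of the smallest string attractor satisfies, for each edit type $\ast\in\{\mathrm{sub},\mathrm{ins},\mathrm{del}\}$: $\mathsf{MS}_{\ast}(\gamma,n)=O(\log n)$ and $\mathsf{AS}_{\ast}(\gamma,n)=O(\delta\log n)$; that is, there is a constant $c$ such that for every string $T$ of length $n$ and every string $T'$ with $\mathsf{ed}(T,T')=1$ (of the corresponding type), $\gamma(T')\le c\,\gamma(T)\log n$ and $\gamma(T')-\gamma(T)\le c\,\delta(T)\log n$.
   Context: Strings are over an alphabet $\Sigma$; $\mathsf{ed}$ is the edit distance (single-character substitutions, insertions, deletions). For a measure $C$: $\mathsf{MS}_{\mathrm{sub}}(C,n)=\max_{T\in\Sigma^n}\{C(T')/C(T): T'\in\Sigma^n,\ \mathsf{ed}(T,T')=1\}$, with $\mathsf{MS}_{\mathrm{ins}},\mathsf{MS}_{\mathrm{del}}$ analogous for $T'$ of length $n+1$, resp. $n-1$, and $\mathsf{AS}_\ast$ analogous with $C(T')-C(T)$. A string attractor of $T$ is a set $\Gamma$ of positions such that every substring of $T$ has an occurrence $T[i..j]$ containing a position of $\Gamma$; $\gamma(T)$ is the minimum size of a string attractor. $\delta(T)=\max_{1\le k\le |T|}\mathsf{Substr}(T,k)/k$, where $\mathsf{Substr}(T,k)$ is the number of distinct length-$k$ substrings of $T$; bounds stated in terms of $\delta$ use $\delta(T)$ of the original string $T$. *)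

From Stdlib Require Import Reals.
From mathcomp Require Import all_boot.
Set Implicit Arguments. Unset Strict Implicit. Unset Printing Implicit Defensive.

Section Strings.
Variable S : eqType.

Fixpoint ed (s : seq S) : seq S -> nat :=
  match s with
  | [::] => fun t => size t
  | a :: s' => fix ed_s (t : seq S) : nat :=
      match t with
      | [::] => size s
      | b :: t' => minn (minn (ed s' t).+1 (ed_s t').+1) (ed s' t' + (a != b))
      end
  end.

(* T[i .. i+k-1] (0-indexed, length k) *)
Definition substr (T : seq S) (i k : nat) : seq S := take k (drop i T).

Definition is_attractor (T : seq S) (G : {set 'I_(size T)}) : bool :=
  [forall i : 'I_(size T), forall k : 'I_(size T).+1,
     ((0 < k)%N && (i + k <= size T)%N) ==>
     [exists i' : 'I_(size T),
        [&& (i' + k <= size T)%N, substr T i' k == substr T i k &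
            [exists p in G, (i' <= p)%N && (p < i' + k)%N]]]].

(* gamma T = minimum size of a string attractor (the full set is always one). *)
Definition gamma (T : seq S) : nat :=
  \big[minn/size T]_(G : {set 'I_(size T)} | is_attractor G) #|G|.

Definition nSubstr (T : seq S) (k : nat) : nat :=
  size (undup [seq substr T i k | i <- iota 0 (size T - k).+1]).

Definition delta (T : seq S) : R :=
  foldr Rmax R0 [seq Rdiv (INR (nSubstr T k)) (INR k) | k <- iota 1 (size T)].

End Strings.

(* Kempa and Prezza: the last positions of the phrases of the greedy LZ77
   parsing form a string attractor.  Grouping the phrases by the dyadic level
   [t] of their length, phrases of level [t] start at least [2 ^ t] apart and,
   except at most five near the ends of the string, each is covered by [2 ^ t]
   distinct leftmost windows of length [4 * 2 ^ t]; hence there are at most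
   [4 delta + 5] of them and [gamma = O(delta log n)].  Moreover
   [delta <= gamma], as every length-[k] substring occurs among the [k] windows
   through some attractor position.  An edit changes at most [k] of the
   length-[k] windows, so [delta T' <= delta T + 1], and altogether
   [gamma T' = O(delta T log n) = O(gamma T log n)]. *)

From HB Require Import structures.
From Stdlib Require Import Reals Lra.
From mathcomp Require Import all_boot zify.
Set Implicit Arguments. Unset Strict Implicit. Unset Printing Implicit Defensive.

(* Lets [bigD1] split the minimum defining [gamma]. *)
HB.instance Definition _ := SemiGroup.isComLaw.Build nat minn minnA minnC.

Section Strings.
Variable S : eqType.
Implicit Types (s t x y m T U : seq S).

Lemma ed_cons (a b : S) s t :
  ed (a :: s) (b :: t) =
  minn (minn (ed s (b :: t)).+1 (ed (a :: s) t).+1) (ed s t + (a != b)).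
Proof. by []. Qed.

Lemma ed_eq0 s t : ed s t = 0 -> s = t.
Proof.
elim: s t => [|a s IH] [|b t] //; rewrite ed_cons => H.
have : ed s t + (a != b) = 0 by lia.
by case: eqP => [-> /eqP | _]; rewrite ?addn0 ?addn1 // => /eqP /IH ->.
Qed.

Lemma ed_eq1 s t : ed s t = 1 ->
  exists x m m' y,
    [/\ s = x ++ m ++ y, t = x ++ m' ++ y, size m <= 1 & size m' <= 1].
Proof.
elim: s t => [|a s IH] [|b t] //.
- by case: t => // _; exists [::], [::], [:: b], [::].
- by case: s {IH} => // _; exists [::], [:: a], [::], [::].
rewrite ed_cons => H.
have [/ed_eq0 ->|[/ed_eq0 <-|]] :
    ed s (b :: t) = 0 \/ ed (a :: s) t = 0 \/ ed s t + (a != b) = 1 by lia.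
- by exists [::], [:: a], [::], (b :: t).
- by exists [::], [::], [:: b], (a :: s).
case: eqP => [<- | _].
  rewrite addn0 => /IH [x [m [m' [y [-> -> hm hm']]]]].
  by exists (a :: x), m, m', y.
by rewrite addn1 => -[] /ed_eq0 ->; exists [::], [:: a], [:: b], t.
Qed.

Lemma size_ed1 s t : ed s t = 1 -> size t <= (size s).+1 <= (size t).+2.
Proof.
by case/ed_eq1=> [x [m [m' [y [-> -> ? ?]]]]]; rewrite !size_cat; lia.
Qed.

Lemma substr_shift U i j L a k :
  substr U i L = substr U j L -> a + k <= L ->
  substr U (i + a) k = substr U (j + a) k.
Proof.
move=> E akL.
have inner p : substr U (p + a) k = take k (drop a (substr U p L)).
  rewrite /substr -[L](subnK (leq_trans (leq_addr k a) akL)) -take_drop.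
  by rewrite take_takel ?drop_drop 1?addnC //; lia.
by rewrite !inner E.
Qed.

Lemma substr_catl x y i k :
  0 < k -> i + k <= size x -> substr (x ++ y) i k = substr x i k.
Proof.
move=> k0 ikx; rewrite /substr drop_cat ifT; last by lia.
by rewrite takel_cat // size_drop; lia.
Qed.

Lemma substr_catr x y i k :
  size x <= i -> substr (x ++ y) i k = substr y (i - size x) k.
Proof. by move=> xi; rewrite /substr drop_cat ifF //; lia. Qed.

(* A window of the edited string either avoids the edited block, and then also
   occurs in the original string, or starts at one of [k] positions. *)
Lemma nSubstr_splice x m m' y k :
  size m <= 1 -> size m' <= 1 -> 0 < k -> k <= size (x ++ m' ++ y) ->
  nSubstr (x ++ m' ++ y) k <= nSubstr (x ++ m ++ y) k + k.
Proof.
move=> hm hm' k0; set T := x ++ m ++ y; set T' := x ++ m' ++ y => kT'.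
have sT : size T = size x + size m + size y by rewrite /T !size_cat addnA.
have sT' : size T' = size x + size m' + size y by rewrite /T' !size_cat addnA.
pose near := [seq substr T' i k | i <- iota (size x + 1 - k) k].
rewrite /nSubstr; set W := undup (map _ (iota 0 (size T - k).+1)).
apply: (@leq_trans (size (W ++ near))); last by rewrite size_cat size_map size_iota.
apply: uniq_leq_size; first exact: undup_uniq.
move=> _ /[!mem_undup] /mapP [i /[!mem_iota] /andP [_ hi] ->].
rewrite mem_cat mem_undup; apply/orP.
case: (leqP (i + k) (size x)) => [left_x | not_left_x].
  left; apply/mapP; exists i; first by rewrite mem_iota; lia.
  by rewrite /T /T' !substr_catl.
case: (leqP (size x + size m') i) => [right_m' | in_near]; last first.
  by right; apply/mapP; exists i => //; rewrite mem_iota; lia.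
left; apply/mapP; exists (i - size m' + size m); first by rewrite mem_iota; lia.
by rewrite /T /T' !substr_catr ?size_cat; try lia; congr substr; lia.
Qed.

Lemma gamma_le_card T (G : {set 'I_(size T)}) : is_attractor G -> gamma T <= #|G|.
Proof. by move=> attG; rewrite /gamma (bigD1 G) //= geq_minl. Qed.

Lemma gamma_attained T :
  exists2 G : {set 'I_(size T)}, is_attractor G & gamma T = #|G|.
Proof.
have attT : is_attractor [set: 'I_(size T)].
  apply/forallP => i; apply/forallP => k; apply/implyP => /andP [k0 ik].
  apply/existsP; exists i; rewrite ik eqxx /=.
  by apply/existsP; exists i; rewrite in_setT leqnn /=; lia.
rewrite /gamma; elim/big_ind: _ => [| u v [G attG ->] [H attH ->] | G attG].
- by exists setT; rewrite // cardsT card_ord.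
- by case: leqP => _; [exists G | exists H].
- by exists G.
Qed.

Lemma nSubstr_le T k : nSubstr T k <= (size T - k).+1.
Proof. by rewrite /nSubstr (leq_trans (size_undup _)) // size_map size_iota. Qed.

Lemma nSubstr_gt0 T k : 0 < nSubstr T k.
Proof. by rewrite /nSubstr lt0n size_eq0; apply/eqP => /undup_nil. Qed.

(* Each window has an occurrence [T[p - o .. p - o + k)] with [p] in the
   attractor and [o < k]. *)
Lemma nSubstr_le_attractor T (G : {set 'I_(size T)}) k :
  is_attractor G -> 0 < k -> k <= size T -> nSubstr T k <= k * #|G|.
Proof.
move=> attG k0 kT.
rewrite mulnC /nSubstr cardE -[k in _ * k](size_iota 0 k).
rewrite -(size_allpairs (fun (p : 'I_(size T)) o => substr T (p - o) k)).
apply: uniq_leq_size; first exact: undup_uniq.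
move=> _ /[!mem_undup] /mapP [i /[!mem_iota] /andP [_ hi] ->].
have iT : i < size T by lia.
have kT1 : k < (size T).+1 by lia.
move/forallP/(_ (Ordinal iT))/forallP/(_ (Ordinal kT1))/implyP: attG.
case/(_ _)/Wrap; first by rewrite /= k0; lia.
case/existsP=> i' /and3P [_ /eqP occ_i /existsP [p /andP [pG /andP [ip pk]]]].
move: pk occ_i => /= pk occ_i.
apply/allpairsP; exists (p, p - i') => /=; split.
- by rewrite mem_enum.
- by rewrite mem_iota; lia.
- by rewrite -occ_i; congr substr; lia.
Qed.

Lemma nSubstr_le_gamma T k : 0 < k -> k <= size T -> nSubstr T k <= k * gamma T.
Proof.
by have [G attG ->] := gamma_attained T; exact: nSubstr_le_attractor.
Qed.
End Strings.

Section LempelZiv.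
Variables (S : eqType) (U : seq S).
Local Notation N := (size U).
Local Notation sub := (substr U).

Definition prev_occ p l := has (fun s => sub s l == sub p l) (iota 0 p).

Definition lpf p := \max_(l < (N - p).+1 | prev_occ p l) l.

Lemma prev_occP p l :
  reflect (exists2 s, s < p & sub s l = sub p l) (prev_occ p l).
Proof.
apply: (iffP hasP) => [[s /[!mem_iota] sp /eqP] | [s sp /eqP]]; first by exists s.
by exists s; rewrite ?mem_iota.
Qed.

Lemma lpf_max p l : l <= N - p -> prev_occ p l -> l <= lpf p.
Proof. by rewrite -ltnS => lN occ_l; exact: (leq_bigmax_cond (Ordinal lN)). Qed.

Lemma lpf_occ p : 0 < lpf p -> prev_occ p (lpf p).
Proof.
have : lpf p = 0 \/ prev_occ p (lpf p).
  by rewrite /lpf; elim/big_ind: _ => [|u v ? ?|l ?]; [left | case: leqP | right].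
by case=> [->|].
Qed.

(* The greedy parsing from [p] (with [f] as fuel): each phrase copies the
   longest previous factor and appends one literal character. *)
Fixpoint lz_starts p f :=
  if f is f'.+1 then (if p < N then p :: lz_starts (p + lpf p).+1 f' else [::])
  else [::].

Lemma lz_starts_range p f q : q \in lz_starts p f -> p <= q < N.
Proof.
elim: f p => //= f IH p; case: ifP => // pN.
by rewrite inE => /orP [/eqP -> | /IH]; lia.
Qed.

Lemma lz_starts_gap p f q1 q2 :
  q1 \in lz_starts p f -> q2 \in lz_starts p f -> q1 < q2 -> (q1 + lpf q1).+1 <= q2.
Proof.
elim: f p => //= f IH p; case: ifP => // pN; rewrite !inE.
case/orP=> [/eqP -> | in1] /orP [/eqP -> | in2] lt12; first by lia.
- by move/lz_starts_range: in2; lia.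
- by move/lz_starts_range: in1; lia.
- exact: IH in1 in2 lt12.
Qed.

Lemma lz_starts_uniq p f : uniq (lz_starts p f).
Proof.
elim: f p => //= f IH p; case: ifP => // pN /=; rewrite IH andbT.
by apply/negP => /lz_starts_range; lia.
Qed.

Lemma lz_starts_cover p f i : p <= i < N -> N - p <= f ->
  exists2 q, q \in lz_starts p f & q <= i <= q + lpf q.
Proof.
elim: f p => [|f IH] p ipN fN; first by lia.
rewrite /= ifT; last by lia.
case: (leqP i (p + lpf p)) => hi; first by exists p; rewrite ?inE ?eqxx //; lia.
have [q qin hq] := IH (p + lpf p).+1 ltac:(lia) ltac:(lia).
by exists q; rewrite // inE qin orbT.
Qed.

(* Only the last phrase can lack its literal character, when [q + lpf q = N]. *)
Definition closed_phrase q := q + lpf q < N.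

Definition lz_ends := [seq q + lpf q | q <- lz_starts 0 N & closed_phrase q].

Definition lz_attractor : {set 'I_N} := [set i : 'I_N | val i \in lz_ends].

(* A leftmost occurrence starting in phrase [q] cannot end inside the copied
   part [U[q .. q + lpf q)], which occurs earlier, so it covers [q + lpf q]. *)
Lemma is_attractor_lz : is_attractor lz_attractor.
Proof.
apply/forallP => i; apply/forallP => k; apply/implyP => /andP [k0 ik].
have exP : exists s, sub s k == sub i k by exists (val i).
case: (ex_minnP exP) => i0 /eqP occ_i0 min_i0.
have i0i : i0 <= i := min_i0 i (eqxx _).
have i0N : i0 < N by lia.
have [q qin /andP [qi0 i0q]] := @lz_starts_cover 0 N i0 ltac:(lia) ltac:(lia).
case: (ltnP (q + lpf q) (i0 + k)) => q_end; last first.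
  have /prev_occP [s sq occ_s] := lpf_occ (ltac:(lia) : 0 < lpf q).
  have := substr_shift occ_s (a := i0 - q) (k := k) ltac:(lia).
  by rewrite subnKC // occ_i0 => /eqP /min_i0; lia.
apply/existsP; exists (Ordinal i0N); rewrite /= occ_i0 eqxx /=.
apply/andP; split; first by lia.
have qN : q + lpf q < N by lia.
apply/existsP; exists (Ordinal qN); rewrite inE /=.
apply/andP; split; last by lia.
by apply/mapP; exists q; rewrite // mem_filter /closed_phrase qN.
Qed.

Lemma gamma_le_lz : gamma U <= size lz_ends.
Proof.
apply: leq_trans (gamma_le_card is_attractor_lz) _.
rewrite cardE -(size_map val); apply: uniq_leq_size.
  by rewrite (map_inj_uniq val_inj) enum_uniq.
by move=> _ /mapP [j /[!mem_enum] /[!inE] jin ->].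
Qed.

End LempelZiv.

Lemma spaced_size_le (s : seq nat) g a c :
  0 < g -> uniq s -> (forall x y, x \in s -> y \in s -> x < y -> x + g <= y) ->
  (forall x, x \in s -> a <= x < a + c * g) -> size s <= c.
Proof.
move=> g0 us spaced rng.
rewrite -(size_map (fun x => (x - a) %/ g)) -[c](size_iota 0).
have lt_block x y : x \in s -> y \in s -> x < y -> (x - a) %/ g < (y - a) %/ g.
  move=> xs ys xy; have := spaced _ _ xs ys xy; have := rng _ xs => hx hxy.
  have step : x - a + 1 * g <= y - a by lia.
  by rewrite (leq_trans _ (leq_div2r g step)) // divnDMl // addn1.
apply: uniq_leq_size.
  rewrite map_inj_in_uniq // => x y xs ys Exy.
  by case: (ltngtP x y) => // [/(lt_block _ _ xs ys) | /(lt_block _ _ ys xs)];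
    rewrite Exy ltnn.
move=> _ /mapP [x xs ->]; rewrite mem_iota leq0n add0n ltn_divLR //=.
by have := rng _ xs; move: (c * g) => cg; lia.
Qed.

Lemma count_le_sum_levels (s : seq nat) (P : pred nat) (f : nat -> nat) K :
  (forall q, q \in s -> P q -> f q < K) ->
  count P s <= \sum_(t < K) count (fun q => P q && (f q == t)) s.
Proof.
elim: s => [|x s IH] fK //=; rewrite big_split /=.
apply: leq_add; last by apply: IH => q qs; apply: fK; rewrite inE qs orbT.
case Px: (P x) => //=.
have fx : f x < K by apply: fK; rewrite ?inE ?eqxx.
by rewrite (bigD1 (Ordinal fx)) //= eqxx leq_addr.
Qed.

Section PhraseLevels.
Variables (S : eqType) (U : seq S).
Local Notation N := (size U).
Local Notation sub := (substr U).
Local Notation lpf := (lpf U).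
Local Notation closed_phrase := (closed_phrase U).
Local Notation phrases := (lz_starts U 0 N).

Lemma leftmost_window q s k :
  closed_phrase q -> s <= q -> (q + lpf q).+1 <= s + k ->
  forall s', s' < s -> sub s' k != sub s k.
Proof.
move=> closed_q sq qk s' s's; apply/eqP => occ_s'.
have := substr_shift occ_s' (a := q - s) (k := (lpf q).+1) ltac:(lia).
rewrite subnKC // => occ_q.
have /(lpf_max _) : prev_occ U q (lpf q).+1.
  by apply/prev_occP; exists (s' + (q - s)) => //; lia.
by move: closed_q; rewrite /closed_phrase => qN /(_ ltac:(lia)); rewrite ltnn.
Qed.

Lemma size_leftmost_le_nSubstr (W : seq nat) k : uniq W ->
  (forall w, w \in W -> w + k <= N /\ forall s', s' < w -> sub s' k != sub w k) ->
  size W <= nSubstr U k.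
Proof.
move=> uW leftW; rewrite /nSubstr -(size_map (sub^~ k)).
apply: uniq_leq_size.
  rewrite map_inj_in_uniq // => x y /leftW [_ Lx] /leftW [_ Ly] Exy.
  by case: (ltngtP x y) => // [/Ly | /Lx]; rewrite Exy eqxx.
move=> _ /mapP [w /leftW [wk _] ->]; rewrite mem_undup.
by apply/mapP; exists w; rewrite // mem_iota; lia.
Qed.

Definition phrase_level q := trunc_log 2 (lpf q).+1.

Definition level_phrases t :=
  [seq q <- phrases | closed_phrase q && (phrase_level q == t)].

Definition inner t q := (2 ^ t <= q) && (q + 4 * 2 ^ t <= N).

Definition inner_phrases t := [seq q <- level_phrases t | inner t q].

Lemma level_phrases_spec t q : q \in level_phrases t ->
  [/\ q \in phrases, closed_phrase q, 2 ^ t <= (lpf q).+1 & (lpf q).+1 < 2 ^ t.+1].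
Proof.
rewrite mem_filter => /andP [/andP [closed_q /eqP <-] qin].
by have /andP [] := @trunc_log_bounds 2 (lpf q).+1 isT isT.
Qed.

Lemma level_phrases_gap t x y :
  x \in level_phrases t -> y \in level_phrases t -> x < y -> x + 2 ^ t <= y.
Proof.
move=> /level_phrases_spec [xs _ lx _] /level_phrases_spec [ys _ _ _] xy.
by have := lz_starts_gap xs ys xy; lia.
Qed.

Lemma level_phrases_uniq t : uniq (level_phrases t).
Proof. exact/filter_uniq/lz_starts_uniq. Qed.

Lemma count_level_phrases_in t (A : pred nat) a c :
  (forall q, q \in level_phrases t -> A q -> a <= q < a + c * 2 ^ t) ->
  count A (level_phrases t) <= c.
Proof.
move=> rng; rewrite -size_filter.
apply: (spaced_size_le (g := 2 ^ t) (a := a)).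
- by rewrite expn_gt0.
- exact/filter_uniq/level_phrases_uniq.
- move=> x y; rewrite !(mem_filter A) => /andP [_ xs] /andP [_ ys].
  exact: level_phrases_gap.
- by move=> x; rewrite (mem_filter A) => /andP [Ax xs]; exact: rng.
Qed.

(* At most one phrase of level [t] starts before [2 ^ t] and at most four
   start in the last [4 * 2 ^ t] positions. *)
Lemma size_level_phrases t : size (level_phrases t) <= size (inner_phrases t) + 5.
Proof.
rewrite -(count_predC (inner t)) size_filter leq_add2l.
apply: (@leq_trans (count (fun q => q < 2 ^ t) (level_phrases t)
                    + count (fun q => N < q + 4 * 2 ^ t) (level_phrases t))).
  rewrite -count_predUI (leq_trans _ (leq_addr _ _)) //.
  by apply: sub_count => q; rewrite /= /inner negb_and -!ltnNge.
apply: (@leq_add _ _ 1 4).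
  by apply: (count_level_phrases_in (a := 0)) => q _ /=; lia.
apply: (count_level_phrases_in (a := N - 4 * 2 ^ t)).
move=> q /level_phrases_spec [qs _ _ _] /=.
by have := lz_starts_range qs; lia.
Qed.

(* Every window of length [4 * 2 ^ t] starting less than [2 ^ t] before an
   inner phrase of level [t] covers that phrase, hence is leftmost. *)
Lemma inner_phrases_windows t :
  size (inner_phrases t) * 2 ^ t <= nSubstr U (4 * 2 ^ t).
Proof.
rewrite -[X in _ * X](size_iota 0 (2 ^ t)) -(size_allpairs (fun q o => q - o)).
have innerP q : q \in inner_phrases t ->
    [/\ q \in level_phrases t, 2 ^ t <= q & q + 4 * 2 ^ t <= N].
  by rewrite mem_filter => /andP [/andP [? ?] ?].
apply: size_leftmost_le_nSubstr.
  apply: allpairs_uniq; [exact/filter_uniq/level_phrases_uniq | exact: iota_uniq |].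
  move=> [q1 o1] [q2 o2] /allpairsP [[x1 y1] [/= /innerP [L1 h1 _] o1t [-> ->]]].
  move=> /allpairsP [[x2 y2] [/= /innerP [L2 h2 _] o2t [-> ->]]] /= E.
  move: o1t o2t; rewrite !mem_iota => o1t o2t.
  case: (ltngtP x1 x2) => [lt | lt | eq12].
  - by have := level_phrases_gap L1 L2 lt; lia.
  - by have := level_phrases_gap L2 L1 lt; lia.
  - by rewrite eq12; congr pair; lia.
move=> _ /allpairsP [[q o] [/= /innerP [qL h1 h2] /[!mem_iota] ot ->]].
have [_ closed_q _ /[!expnS] lq] := level_phrases_spec qL.
split; first by lia.
by apply: (leftmost_window closed_q); lia.
Qed.

Lemma inner_phrases_fit t : 0 < size (inner_phrases t) -> 4 * 2 ^ t <= N.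
Proof.
case E: (inner_phrases t) => [|q r] // _.
have : q \in inner_phrases t by rewrite E inE eqxx.
by rewrite mem_filter => /andP [/andP [_ ?] _]; lia.
Qed.

Lemma size_lz_ends_levels :
  size (lz_ends U) <= \sum_(t < (trunc_log 2 N).+1) (size (inner_phrases t) + 5).
Proof.
rewrite size_map size_filter.
set K := (trunc_log 2 N).+1.
apply: leq_trans (count_le_sum_levels (K := K) (f := phrase_level) _) _.
  move=> q _ closed_q; rewrite ltnS; apply: leq_trunc_log.
  by move: closed_q; rewrite /closed_phrase; lia.
by apply: leq_sum => t _; rewrite -size_filter; exact: size_level_phrases.
Qed.

End PhraseLevels.

Open Scope R_scope.

Lemma foldr_Rmax_ub (f : nat -> R) (l : seq nat) k :
  k \in l -> f k <= foldr Rmax 0 (map f l).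
Proof.
elim: l => //= a l IH; rewrite inE => /orP [/eqP -> | /IH kl]; first exact: Rmax_l.
exact: Rle_trans kl (Rmax_r _ _).
Qed.

Lemma foldr_Rmax_lub (f : nat -> R) (l : seq nat) B :
  0 <= B -> (forall k, k \in l -> f k <= B) -> foldr Rmax 0 (map f l) <= B.
Proof.
move=> B0; elim: l => //= a l IH fB.
apply: Rmax_lub; first by apply: fB; rewrite inE eqxx.
by apply: IH => k kl; apply: fB; rewrite inE kl orbT.
Qed.

Lemma INR_sum_le K (x : nat -> nat) B :
  (forall t, (t < K)%N -> INR (x t) <= B) -> INR (\sum_(t < K) x t) <= INR K * B.
Proof.
elim: K => [|K IH] xB; first by rewrite big_ord0 /=; lra.
rewrite big_ord_recr plus_INR S_INR /= Rmult_plus_distr_r Rmult_1_l.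
exact: Rplus_le_compat (IH (fun t tK => xB t (ltnW tK))) (xB K (ltnSn K)).
Qed.

Section Delta.
Variable S : eqType.
Implicit Types T U : seq S.

Lemma delta_ge0 T : 0 <= delta T.
Proof.
rewrite /delta; elim: (map _ _) => /= [|r l IH]; first lra.
exact: Rle_trans IH (Rmax_r _ _).
Qed.

Lemma nSubstr_le_delta T k :
  (0 < k)%N -> (k <= size T)%N -> INR (nSubstr T k) <= delta T * INR k.
Proof.
move=> k0 kT; have k0R : 0 < INR k by apply/lt_0_INR/ltP.
have kin : k \in iota 1 (size T) by rewrite mem_iota; lia.
have -> : INR (nSubstr T k) = INR (nSubstr T k) / INR k * INR k by field; lra.
apply: Rmult_le_compat_r; first lra.
exact: (foldr_Rmax_ub (fun k => INR (nSubstr T k) / INR k) kin).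
Qed.

Lemma delta_le T D : 0 <= D ->
  (forall k, (0 < k)%N -> (k <= size T)%N -> INR (nSubstr T k) <= D * INR k) ->
  delta T <= D.
Proof.
move=> D0 nD; apply: foldr_Rmax_lub => // k /[!mem_iota] /andP [k1 kT].
have k0R : 0 < INR k by apply/lt_0_INR/ltP.
apply: (Rmult_le_reg_r _ _ _ k0R); field_simplify; last lra.
by have := nD k k1 ltac:(lia); lra.
Qed.

Lemma delta_le_gamma T : delta T <= INR (gamma T).
Proof.
apply: delta_le => [|k k0 kT]; first exact: pos_INR.
by have /leP /le_INR := nSubstr_le_gamma k0 kT; rewrite -multE mult_INR; lra.
Qed.

Lemma delta_ge1 T : (0 < size T)%N -> 1 <= delta T.
Proof.
move=> T0; have := nSubstr_le_delta (k := 1) isT T0.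
by have /leP /(le_INR 1) /= := nSubstr_gt0 T 1; lra.
Qed.

Lemma delta_edit T T' : ed T T' = 1%N -> delta T' <= delta T + 1.
Proof.
move=> edT; have [/andP [sT' _]] := size_ed1 edT.
have d0 := delta_ge0 T.
apply: delta_le => [|k k0 kT']; first lra.
have k0R : 1 <= INR k by apply: (le_INR 1); apply/leP.
case: (leqP k (size T)) => kT.
  have [x [m [m' [y [ET ET' hm hm']]]]] := ed_eq1 edT.
  have := nSubstr_splice hm hm' k0 (_ : (k <= size (x ++ m' ++ y))%N).
  rewrite -ET -ET' => /(_ kT') /leP /le_INR.
  rewrite plus_INR; have := nSubstr_le_delta k0 kT; lra.
have : (nSubstr T' k <= 1)%N by rewrite (leq_trans (nSubstr_le _ _)) //; lia.
move=> /leP /le_INR /=; nra.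
Qed.

Lemma inner_phrases_le_delta U t : INR (size (inner_phrases U t)) <= 4 * delta U.
Proof.
have d0 := delta_ge0 U.
case: (posnP (size (inner_phrases U t))) => [-> /= | /inner_phrases_fit fit]; first lra.
have k0 : (0 < 4 * 2 ^ t)%N by rewrite muln_gt0 expn_gt0.
have := nSubstr_le_delta k0 fit.
have /leP /le_INR := inner_phrases_windows U t.
have tR : 0 < INR (2 ^ t) by apply/lt_0_INR/ltP; rewrite expn_gt0.
by rewrite !mult_INR /=; nra.
Qed.

Theorem gamma_le_delta_log U :
  INR (gamma U) <= INR (trunc_log 2 (size U)).+1 * (4 * delta U + 5).
Proof.
have /leP /le_INR gamma_sum := leq_trans (gamma_le_lz U) (size_lz_ends_levels U).
apply: Rle_trans gamma_sum _.
apply: (@INR_sum_le _ (fun t => size (inner_phrases U t) + 5)%N) => t _.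
by rewrite plus_INR; have := inner_phrases_le_delta U t; simpl; lra.
Qed.

End Delta.

Lemma INR_expn b t : INR (b ^ t) = INR b ^ t.
Proof. by elim: t => [|t IH] //=; rewrite expnS -multE mult_INR IH. Qed.

Lemma ln_le_ln x y : 0 < x -> x <= y -> ln x <= ln y.
Proof.
move=> x0 /Rle_lt_or_eq_dec [xy | ->]; last exact: Rle_refl.
exact/Rlt_le/ln_increasing.
Qed.

(* With [t = trunc_log 2 m]: [(t + 1) ln 2 <= ln (4 n) <= 3 ln n] and [ln 2 > 1/2]. *)
Lemma trunc_log2_le_ln m n : (2 <= n)%N -> (0 < m)%N -> (m <= n.+1)%N ->
  INR (trunc_log 2 m).+1 <= 6 * ln (INR n).
Proof.
move=> n2 m0 mn.
have n2R : 2 <= INR n by apply: (le_INR 2); apply/leP.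
have pow_t : 2 ^ trunc_log 2 m <= 2 * INR n.
  have /leP /le_INR := leq_trans (@trunc_logP 2 m isT m0) mn.
  have INR2 : INR 2 = 2 by rewrite /=; lra.
  by rewrite INR_expn INR2 S_INR; lra.
have := ln_le_ln (pow_lt 2 _ ltac:(lra)) pow_t.
rewrite ln_pow ?ln_mult; try lra.
have := ln_le_ln (ltac:(lra) : 0 < 2) n2R.
have := ln_lt_2; have := pos_INR (trunc_log 2 m); rewrite S_INR; nra.
Qed.

Theorem mainTheorem4 :
  exists c : R,
    forall (S : eqType) (T T' : seq S),
      (2 <= size T)%N ->
      ed T T' = 1%N ->
      INR (gamma T') <= c * INR (gamma T) * ln (INR (size T)) /\
      INR (gamma T') - INR (gamma T) <= c * delta T * ln (INR (size T)).
Proof.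
exists 78 => S T T' T2 edT.
have [/andP [sT' sT]] := size_ed1 edT.
have deltaT1 := delta_ge1 (ltac:(lia) : (0 < size T)%N).
have deltaT' : 4 * delta T' + 5 <= 13 * delta T by have := delta_edit edT; lra.
have logT' := trunc_log2_le_ln T2 (ltac:(lia) : (0 < size T')%N) sT'.
have gammaT' : INR (gamma T') <= 78 * delta T * ln (INR (size T)).
  apply: Rle_trans (gamma_le_delta_log T') _.
  apply: Rle_trans (Rmult_le_compat_l _ _ _ (pos_INR _) deltaT') _.
  by apply: Rle_trans (Rmult_le_compat_r _ _ _ _ logT') _; lra.
have ln0 : 0 <= ln (INR (size T)).
  by rewrite -ln_1; apply: ln_le_ln; [lra | apply: (le_INR 1); apply/leP; lia].
have := delta_le_gamma T; have := pos_INR (gamma T); split; nra.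
Qed.
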